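(* Let $q$ be an odd prime power, $m\geq 2$, $n=\frac{q^m+1}{2}$, and suppose $q^m\equiv 1\pmod 4$. Let $i$ be an odd integer with $\frac{q^m-1}{2}-q^{m-1}<i<n$ of the form $i=\frac{q-3}{2}q^{m-1}+i_{m-2}q^{m-2}+\cdots+i_1q+i_0$, where $i_0,i_1,\ldots,i_{m-2}\in\{\frac{q-3}{2},\frac{q-1}{2},\frac{q+1}{2}\}$. Then $i$ is not a coset leader modulo $q^m+1$.
   Context: The $q$-cyclotomic coset of $i$ modulo $q^m+1$ is $\{i,iq,iq^2,\ldots\}\bmod(q^m+1)$; its smallest element is its coset leader, and $i$ is called a coset leader if it is the coset leader of its own coset. *)

From mathcomp Require Import all_boot.
Set Implicit Arguments. Unset Strict Implicit. Unset Printing Implicit Defensive.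

Definition prime_power (q : nat) : Prop :=
  exists p k, prime p /\ 0 < k /\ q = p ^ k.

Definition cyc_coset (q N i : nat) : nat -> Prop :=
  fun x => exists j, x = (i * q ^ j) %% N.

Definition is_coset_leader (q N i : nat) : Prop :=
  cyc_coset q N i (i %% N) /\
  forall x, cyc_coset q N i x -> i %% N <= x.

(* Put N = q^(m+1) + 1 and n = N/2, which is odd because q^(m+1) = 1 (mod 4).
   If i were a coset leader, every r_j = i q^j mod N would lie in [i, N - i],
   since r_j + r_(j+m+1) = N.  The centred residues x_j = n - r_j are then even,
   bounded by F = n - i <= q^m, and satisfy x_(j+1) = q x_j (mod N).  As q F < N,
   going from q x_j to x_(j+1) removes at most one multiple of N, and does so
   exactly when the sign changes; because N = 2 (mod 4) and (q - 1) x_j = 0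
   (mod 4), the class of x_j mod 4, shifted by 2 when x_j < 0, never changes.
   But x_(m+1) = -F = -x_0, whose shifted class differs from that of x_0. *)

From mathcomp Require Import all_boot all_order all_algebra.
From mathcomp Require Import zify ring.
Import Order.TTheory GRing.Theory Num.Theory.

Set Implicit Arguments.
Unset Strict Implicit.
Unset Printing Implicit Defensive.

Local Open Scope ring_scope.

Definition twisted_mod4 (x : int) : int :=
  if x < 0 then ((x + 2) %% 4)%Z else (x %% 4)%Z.

Lemma twisted_mod4N (x : int) :
  (2 %| x)%Z -> x != 0 -> twisted_mod4 (- x) != twisted_mod4 x.
Proof. by rewrite /twisted_mod4 => x_even x_neq0; do 2 case: ifP; lia. Qed.

Lemma twisted_mod4_mul_step (N q F x y : int) :
  (N %% 4 = 2)%Z -> (q %% 2 = 1)%Z -> 0 < q -> q * F < N ->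
  `|x| <= F -> `|y| <= F -> (2 %| x)%Z -> (N %| q * x - y)%Z ->
  twisted_mod4 y = twisted_mod4 x.
Proof.
move=> N4 q2 q0 qFN xF yF x2 /dvdzP[e eN].
have qx4 : (4 %| q * x - x)%Z.
  have -> : q * x - x = (q - 1) * x by ring.
  by apply: (@dvdz_mul 2 2); rewrite // dvdzE; lia.
have qxF : `|q * x| <= q * F by rewrite normrM gtr0_norm // ler_pM2l.
have qx_neg : (q * x < 0) = (x < 0) by rewrite pmulr_rlt0.
have F_le_qF : F <= q * F by rewrite ler_peMl //; lia.
have N0 : 0 < N by lia.
have e_small : `|e| * N < 2 * N.
  by rewrite -[N in `|e| * N]gtr0_norm // -normrM -eN; lia.
have e0 : -2 < e < 2 by rewrite -ltr_norml -(ltr_pM2r N0).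
have [E|[E|E]] : e = 0 \/ e = 1 \/ e = -1 by lia.
all: rewrite /twisted_mod4 E in eN *; do 2 case: ifP; lia.
Qed.

Lemma twisted_mod4_orbit (N q F : int) (x : nat -> int) :
  (N %% 4 = 2)%Z -> (q %% 2 = 1)%Z -> 0 < q -> q * F < N ->
  (forall k, `|x k| <= F) -> (forall k, (2 %| x k)%Z) ->
  (forall k, (N %| q * x k - x k.+1)%Z) ->
  forall k, twisted_mod4 (x k) = twisted_mod4 (x 0).
Proof.
move=> N4 q2 q0 qFN xF x2 xS; elim=> // k <-.
exact: twisted_mod4_mul_step N4 q2 q0 qFN (xF k) (xF k.+1) (x2 k) (xS k).
Qed.

Local Close Scope ring_scope.

Section CosetLeader.

Variables q m i : nat.
Let N := q ^ m + 1.
Let r j := i * q ^ j %% N.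

Hypothesis i_gt0 : 0 < i.
Hypothesis i_ltN : i < N.
Hypothesis leader : is_coset_leader q N i.

Lemma coset_leader_le_orbit j : i <= r j.
Proof. by rewrite -{1}(modn_small i_ltN); apply: leader.2; exists j. Qed.

Lemma coset_leader_orbit_antipode j : r j + r (j + m) = N.
Proof.
have rN k : r k < N by rewrite ltn_mod /N addn1.
have := coset_leader_le_orbit j; have := coset_leader_le_orbit (j + m).
have := rN j; have := rN (j + m).
have : N %| r j + r (j + m).
  by rewrite /dvdn modnDm expnD mulnA -{1}(muln1 (i * q ^ j)) -mulnDr addnC modnMl.
by case/dvdnP=> [[|[|t]] ht]; rewrite ?mulSn in ht; lia.
Qed.

End CosetLeader.

Section NearHalf.

Variables q m i : nat.
Let N := q ^ m.+1 + 1.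
Let n := N %/ 2.

Hypothesis q_odd : odd q.
Hypothesis qm_mod4 : q ^ m.+1 %% 4 = 1.
Hypothesis i_odd : odd i.
Hypothesis i_ge : n - q ^ m <= i.
Hypothesis i_lt : i < n.

Let r j := i * q ^ j %% N.
Let x j : int := (n%:Z - (r j)%:Z)%R.

Let N_double : N = 2 * n. Proof. by rewrite /n /N; lia. Qed.

Let centered_orbit0 : x 0 = ((n - i)%:Z)%R.
Proof. by rewrite /x /r expn0 muln1 modn_small; lia. Qed.

Lemma centered_orbit_even j : (2 %| x j)%Z.
Proof.
have r_odd : odd (r j) by rewrite /r odd_mod ?oddM ?oddX ?i_odd ?q_odd ?orbT; lia.
by rewrite /x dvdzE; lia.
Qed.

Lemma centered_orbit_mul_congr j : (N%:Z %| (q%:Z * x j - x j.+1)%R)%Z.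
Proof.
have rS : r j.+1 = r j * q %% N by rewrite /r modnMml -mulnA -expnSr.
have qh : q = (2 * (q %/ 2)).+1 by lia.
move: (divn_eq (r j * q) N); rewrite -rS => rqE.
apply/dvdzP; exists ((q %/ 2)%:Z - (r j * q %/ N)%:Z)%R; rewrite /x; nia.
Qed.

Lemma mul_centered_orbit0_lt : (q%:Z * x 0 < N%:Z)%R.
Proof.
have qQ : q ^ m.+1 = q * q ^ m := expnS q m.
have : (q%:Z * x 0 <= q%:Z * (q ^ m)%:Z)%R by rewrite ler_pM2l ?centered_orbit0; lia.
lia.
Qed.

Section Leader.

Hypothesis leader : is_coset_leader q N i.

Let i_lt_N : i < N. Proof. by lia. Qed.

Let orbit_antipode j : r j + r (j + m.+1) = N.
Proof. by apply: coset_leader_orbit_antipode i_lt_N leader j; lia. Qed.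

Lemma centered_orbit_le j : (`|x j| <= x 0)%R.
Proof.
have lo : i <= r j := coset_leader_le_orbit i_lt_N leader j.
have hi : i <= r (j + m.+1) := coset_leader_le_orbit i_lt_N leader (j + m.+1).
by have := orbit_antipode j; have := N_double; rewrite centered_orbit0 /x; lia.
Qed.

Lemma centered_orbit_antipode : x m.+1 = (- x 0)%R.
Proof.
have := orbit_antipode 0; have := N_double.
by rewrite centered_orbit0 /x /r add0n expn0 muln1 modn_small; lia.
Qed.

End Leader.

Theorem not_coset_leader_near_half : ~ is_coset_leader q N i.
Proof.
move=> leader.
have N4 : (N %% 4 = 2)%Z by rewrite /N; lia.
have q2 : (q %% 2 = 1)%Z by lia.
have q0 : (0 < q%:Z)%R by lia.
have := twisted_mod4_orbit N4 q2 q0 mul_centered_orbit0_lt (centered_orbit_le leader)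
  centered_orbit_even centered_orbit_mul_congr m.+1.
rewrite (centered_orbit_antipode leader); apply/eqP/twisted_mod4N.
  exact: centered_orbit_even.
by rewrite centered_orbit0; lia.
Qed.

End NearHalf.

Theorem lemma29 (q m i : nat) (d : nat -> nat) :
  prime_power q -> odd q -> 2 <= m ->
  q ^ m %% 4 = 1 ->
  odd i ->
  (q ^ m - 1) %/ 2 - q ^ m.-1 < i -> i < (q ^ m + 1) %/ 2 ->
  (forall j, j < m.-1 ->
     d j = (q - 3) %/ 2 \/ d j = (q - 1) %/ 2 \/ d j = (q + 1) %/ 2) ->
  i = (q - 3) %/ 2 * q ^ m.-1 + \sum_(j < m.-1) d j * q ^ j ->
  ~ is_coset_leader q (q ^ m + 1) i.
Proof.
(* Only the range and parity of i matter. *)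
case: m => [//|m] /= _ q_odd _ qm_mod4 i_odd i_gt i_lt _ _.
by apply: not_coset_leader_near_half => //; lia.
Qed.
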